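(* Consider economies with individual endowments and single-peaked preferences. A rule on this domain satisfies own-peak-onliness, efficiency, the endowments guarantee, and not obvious manipulability (NOM) if and only if it is a simple reallocation rule.
   Context: Let $N=\{1,\dots,n\}$ be a finite set of agents. A preference $R_i$ is a continuous complete preorder on $\mathbb{R}_+\cup\{\infty\}$ ($P_i$ strict, $I_i$ indifference); its peak $p(R_i)$ is the set of maximal elements. $R_i$ is single-peaked if $p(R_i)$ is a singleton (identified with its element) and for $x,x'\in\mathbb{R}_+$, $xP_ix'$ whenever $x'<x\le p(R_i)$ or $p(R_i)\le x<x'$; $\mathcal{SP}$ is the set of these. An economy is $(R,\omega)$ with $R\in\mathcal{SP}^n$ and an endowment profile $\omega=(\omega_i)_{i\in N}\in\mathbb{R}^n_+$ with $\Omega=\sum_j\omega_j>0$. A rule assigns to each economy $\varphi(R,\omega)\in\mathbb{R}^n_+$ with $\sum_j\varphi_j(R,\omega)=\Omega$. Properties: Efficiency: no $x\in\mathbb{R}^n_+$ with $\sum_jx_j=\Omega$ has $x_iR_i\varphi_i(R,\omega)$ for all $i$ and $x_iP_i\varphi_i(R,\omega)$ for some $i$. Own-peak-onliness: $p(R_i')=p(R_i)$ implies $\varphi_i(R,\omega)=\varphi_i(R_i',R_{-i},\omega)$. Endowments guarantee: $p(R_i)=\omega_i$ implies $\varphi_i(R,\omega)I_i\omega_i$. Option set $O^\varphi(R_i,\omega)=\{\varphi_i(R_i,R_{-i},\omega):R_{-i}\in\mathcal{SP}^{n-1}\}$; $R_i'$ is a manipulation at $(R_i,\omega)$ if $\varphi_i(R_i',R_{-i},\omega)P_i\varphi_i(R_i,R_{-i},\omega)$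 for some $R_{-i}$, and an obvious manipulation if moreover each $x'\in O^\varphi(R_i',\omega)$ satisfies $x'P_ix$ for some $x\in O^\varphi(R_i,\omega)$; NOM means there is no obvious manipulation. Simple reallocation rule: let $z(R,\omega)=\sum_jp(R_j)-\Omega$; agent $i$ is simple if ($z\ge0$ and $p(R_i)<\omega_i$) or ($z\le0$ and $p(R_i)>\omega_i$). An own-peak-only rule is a simple reallocation rule if for every economy it assigns to each simple agent his peak $p(R_i)$ and to each non-simple agent an amount in the closed interval between $\omega_i$ and $p(R_i)$. *)

From HB Require Import structures.
From mathcomp Require Import all_boot all_order all_algebra.
From mathcomp Require Import boolp classical_sets reals ereal topology.
Set Implicit Arguments. Unset Strict Implicit. Unset Printing Implicit Defensive.
Import Order.TTheory GRing.Theory Num.Theory.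
Local Open Scope classical_set_scope.
Local Open Scope ring_scope.
Local Open Scope ereal_scope.

Section Reallocation.
Variable R : realType.

(* The consumption space R_+ \cup {oo}, seen inside the extended reals. *)
Definition dom (x : \bar R) : Prop := 0 <= x.

(* A preference is a binary relation ("weakly preferred to") on the
   consumption space; only its restriction to [dom] matters. *)
Definition pref := \bar R -> \bar R -> Prop.

Definition strict (Ri : pref) (x y : \bar R) : Prop := Ri x y /\ ~ Ri y x.
Definition indiff (Ri : pref) (x y : \bar R) : Prop := Ri x y /\ Ri y x.

Definition complete_preorder (Ri : pref) : Prop :=
  (forall x y, dom x -> dom y -> Ri x y \/ Ri y x) /\
  (forall x y z, dom x -> dom y -> dom z -> Ri x y -> Ri y z -> Ri x z).

Definition continuous_pref (Ri : pref) : Prop :=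
  forall x, dom x ->
    closed [set y | dom y /\ Ri y x] /\ closed [set y | dom y /\ Ri x y].

Definition peak_set (Ri : pref) : set (\bar R) :=
  [set p | dom p /\ forall y, dom y -> Ri p y].

Definition peak (Ri : pref) : \bar R :=
  match pselect (exists p, peak_set Ri p) with
  | left h => projT1 (cid h)
  | right _ => 0
  end.

Definition single_peaked (Ri : pref) : Prop :=
  complete_preorder Ri /\ continuous_pref Ri /\
  (exists p, peak_set Ri = [set p]) /\
  (forall x x' : R, (0 <= x)%R -> (0 <= x')%R ->
     ((x'%:E < x%:E /\ x%:E <= peak Ri) \/ (peak Ri <= x%:E /\ x%:E < x'%:E)) ->
     strict Ri x%:E x'%:E).

Definition profile (n : nat) := 'I_n -> pref.

Definition SP_profile n (P : profile n) : Prop := forall j, single_peaked (P j).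

Definition total n (w : 'I_n -> R) : R := (\sum_(j < n) w j)%R.

Definition endowment n (w : 'I_n -> R) : Prop :=
  (forall j, (0 <= w j)%R) /\ (0 < total w)%R.

Definition economy n (P : profile n) (w : 'I_n -> R) : Prop :=
  SP_profile P /\ endowment w.

Definition rule_fun (n : nat) := profile n -> ('I_n -> R) -> ('I_n -> R).

Definition is_rule n (phi : rule_fun n) : Prop :=
  forall P w, economy P w ->
    (forall j, (0 <= phi P w j)%R) /\ total (phi P w) = total w.

Definition upd n (P : profile n) (i : 'I_n) (Ri : pref) : profile n :=
  fun j => if j == i then Ri else P j.

Definition efficient n (phi : rule_fun n) : Prop :=
  forall P w, economy P w ->
    ~ exists x : 'I_n -> R,
        (forall j, (0 <= x j)%R) /\ total x = total w /\
        (forall j, P j (x j)%:E (phi P w j)%:E) /\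
        (exists j, strict (P j) (x j)%:E (phi P w j)%:E).

Definition own_peak_only n (phi : rule_fun n) : Prop :=
  forall P w i Ri', economy P w -> single_peaked Ri' ->
    peak Ri' = peak (P i) -> phi P w i = phi (upd P i Ri') w i.

Definition endowments_guarantee n (phi : rule_fun n) : Prop :=
  forall P w i, economy P w -> peak (P i) = (w i)%:E ->
    indiff (P i) (phi P w i)%:E (w i)%:E.

Definition option_set n (phi : rule_fun n) (i : 'I_n) (Ri : pref)
  (w : 'I_n -> R) : set R :=
  [set x | exists Q : profile n,
      (forall j, j != i -> single_peaked (Q j)) /\ phi (upd Q i Ri) w i = x].

Definition manipulation n (phi : rule_fun n) (i : 'I_n) (Ri Ri' : pref)
  (w : 'I_n -> R) : Prop :=
  exists Q : profile n, (forall j, j != i -> single_peaked (Q j)) /\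
    strict Ri (phi (upd Q i Ri') w i)%:E (phi (upd Q i Ri) w i)%:E.

Definition obvious_manipulation n (phi : rule_fun n) (i : 'I_n) (Ri Ri' : pref)
  (w : 'I_n -> R) : Prop :=
  manipulation phi i Ri Ri' w /\
  forall x', option_set phi i Ri' w x' ->
    exists2 x, option_set phi i Ri w x & strict Ri x'%:E x%:E.

Definition NOM n (phi : rule_fun n) : Prop :=
  forall i Ri Ri' w, endowment w -> single_peaked Ri -> single_peaked Ri' ->
    ~ obvious_manipulation phi i Ri Ri' w.

Definition excess n (P : profile n) (w : 'I_n -> R) : \bar R :=
  (\sum_(j < n) peak (P j)) - (total w)%:E.

Definition simple_agent n (P : profile n) (w : 'I_n -> R) (i : 'I_n) : Prop :=
  (0 <= excess P w /\ peak (P i) < (w i)%:E) \/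
  (excess P w <= 0 /\ (w i)%:E < peak (P i)).

Definition simple_reallocation_rule n (phi : rule_fun n) : Prop :=
  own_peak_only phi /\
  forall P w, economy P w -> forall i,
    (simple_agent P w i -> (phi P w i)%:E = peak (P i)) /\
    (~ simple_agent P w i ->
       Order.min (w i)%:E (peak (P i)) <= (phi P w i)%:E /\
       (phi P w i)%:E <= Order.max (w i)%:E (peak (P i))).

End Reallocation.

(* A simple reallocation rule keeps every agent between his endowment and his
   peak, and on the long side of the market (given by the sign of the excess
   demand) all agents stay on the same side of their peaks, so no feasible
   reallocation helps one agent without hurting another.  Every option of an
   agent is at least as good as his endowment, while the endowment itself is an
   option under any report (let the others peak at their endowments): no report
   is an obvious manipulation.

   Conversely, the endowments guarantee and NOM give individual rationality:
   if truth-telling could leave agent i worse off than w_i, reporting the peak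
   w_i, which always yields exactly w_i, would be an obvious manipulation.  By
   own-peak-onliness the allocation of i does not move when his preference is
   replaced by a very steep one with the same peak, and individual rationality
   for all of these pins it between w_i and the peak.  Finally, efficiency
   forbids one agent above and another below his peak (a small transfer helps
   both), which with the sign of the excess demand sends simple agents exactly
   to their peaks. *)

From Pilot Require Import Defs.
From HB Require Import structures.
From mathcomp Require Import all_boot all_order all_algebra.
From mathcomp Require Import boolp classical_sets reals ereal topology normedtype.
From mathcomp Require Import lra.
Set Implicit Arguments. Unset Strict Implicit. Unset Printing Implicit Defensive.
Import Order.TTheory GRing.Theory Num.Theory.
Local Open Scope classical_set_scope.
Local Open Scope ring_scope.
Local Open Scope ereal_scope.

Section Preferences.
Variable R : realType.

Lemma peak_set1 (Ri : pref R) p : peak_set Ri = [set p] -> peak Ri = p.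
Proof.
move=> Ep; rewrite /peak; case: pselect => [h|[]]; last by exists p; rewrite Ep.
by case: (cid h) => q /=; rewrite Ep.
Qed.

Lemma dom_EFin (x : R) : (0 <= x)%R -> dom x%:E.
Proof. by rewrite /dom lee_fin. Qed.

Lemma lt_exists_shift (d v : R) (y : \bar R) : (0 < d)%R -> v%:E < y ->
  exists2 e : R, (0 < e <= d)%R & (v + e)%:E <= y.
Proof.
move=> d0; case: y => [s||] // vs.
  rewrite lte_fin in vs; exists (Order.min d (s - v)%R).
    by rewrite lt_min d0 subr_gt0 vs ge_min lexx.
  by rewrite lee_fin -lerBrDl ge_min lexx orbT.
by exists d; rewrite ?d0 ?lexx ?leey.
Qed.

Section SinglePeaked.
Variable Ri : pref R.
Hypothesis spRi : single_peaked Ri.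

Lemma sp_peak_set : peak_set Ri (peak Ri).
Proof. by case: spRi => _ [_ [[p Ep] _]]; rewrite (peak_set1 Ep) Ep. Qed.

Lemma sp_dom_peak : dom (peak Ri).
Proof. by case: sp_peak_set. Qed.

Lemma sp_refl x : dom x -> Ri x x.
Proof. by case: spRi => -[tot _] _ dx; case: (tot x x dx dx). Qed.

Lemma sp_peak_uniq x : dom x -> Ri x (peak Ri) -> x = peak Ri.
Proof.
move=> dx xp; have [dp pmax] := sp_peak_set.
case: spRi => -[_ tr] [_ [[p Ep] _]].
have : peak_set Ri x by split => // y dy; exact: tr xp (pmax y dy).
by rewrite Ep (peak_set1 Ep).
Qed.

Lemma sp_strict_left (x x' : R) : (0 <= x')%R -> (x' < x)%R -> x%:E <= peak Ri ->
  strict Ri x%:E x'%:E.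
Proof.
move=> x'0 x'x xp; case: spRi => _ [_ [_ mono]].
by apply: mono => //; [exact: le_trans (ltW x'x) | left; rewrite lte_fin].
Qed.

Lemma sp_strict_right (x x' : R) : (0 <= x)%R -> peak Ri <= x%:E -> (x < x')%R ->
  strict Ri x%:E x'%:E.
Proof.
move=> x0 px xx'; case: spRi => _ [_ [_ mono]].
by apply: mono => //; [exact: le_trans (ltW xx') | right; rewrite lte_fin].
Qed.

Lemma sp_strict_of_not_pref x y : dom x -> dom y -> ~ Ri x y -> strict Ri y x.
Proof. by case: spRi => -[tot _] _ dx dy nxy; case: (tot x y dx dy). Qed.

Lemma sp_pref_between (a b : R) : (0 <= a)%R ->
  Order.min a%:E (peak Ri) <= b%:E -> b%:E <= Order.max a%:E (peak Ri) ->
  Ri b%:E a%:E.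
Proof.
move=> a0 lo hi.
have [ab|ba|<-] := ltgtP a b; last by apply: sp_refl; rewrite /dom lee_fin.
  move: hi; rewrite le_max lee_fin (lt_geF ab) /= => bp.
  by case: (sp_strict_left a0 ab bp).
move: lo; rewrite ge_min lee_fin (lt_geF ba) /= => pb.
have b0 : (0 <= b)%R by rewrite -lee_fin; exact: le_trans sp_dom_peak pb.
by case: (sp_strict_right b0 pb ba).
Qed.

Lemma sp_pref_below_peak (x y : R) : (0 <= x)%R -> y%:E <= peak Ri ->
  Ri x%:E y%:E -> (y <= x)%R.
Proof.
move=> x0 yp xy; rewrite leNgt; apply/negP => xy'.
by case: (sp_strict_left x0 xy' yp).
Qed.

Lemma sp_pref_above_peak (x y : R) : (0 <= y)%R -> peak Ri <= y%:E ->
  Ri x%:E y%:E -> (x <= y)%R.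
Proof.
move=> y0 py xy; rewrite leNgt; apply/negP => yx.
by case: (sp_strict_right y0 py yx).
Qed.

End SinglePeaked.

Section WeightedDistance.
Variables (p a b : R).
Hypotheses (a0 : (0 < a)%R) (b0 : (0 < b)%R).

(* [-oo] lies outside the consumption space; it gets the junk value [+oo]. *)
Definition wdist (y : \bar R) : \bar R :=
  if y is r%:E then (Num.max ((p - r) / a) ((r - p) / b))%:E else +oo.

Definition wdist_pref : pref R := fun y x => wdist y <= wdist x.

Lemma wdist_left (r : R) : (r <= p)%R -> wdist r%:E = ((p - r) / a)%:E.
Proof.
move=> rp; congr EFin; apply: max_l; apply: (@le_trans _ _ 0%R).
  by rewrite ler_pdivrMr // mul0r subr_le0.
by rewrite divr_ge0 ?subr_ge0 // ltW.
Qed.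

Lemma wdist_right (r : R) : (p <= r)%R -> wdist r%:E = ((r - p) / b)%:E.
Proof.
move=> pr; congr EFin; apply: max_r; apply: (@le_trans _ _ 0%R).
  by rewrite ler_pdivrMr // mul0r subr_le0.
by rewrite divr_ge0 ?subr_ge0 // ltW.
Qed.

Lemma wdist_ge0 y : 0 <= wdist y.
Proof.
case: y => [r||] //=; rewrite lee_fin le_max.
by case: (leP r p) => rp; apply/orP; [left|right];
  apply: divr_ge0; rewrite ?subr_ge0 // ltW.
Qed.

Lemma wdist_le y (s : R) :
  (wdist y <= s%:E) = ((p - s * a)%:E <= y) && (y <= (p + s * b)%:E).
Proof.
case: y => [r||] /=; rewrite ?leey ?leNye ?andbF //.
rewrite !lee_fin ge_max !ler_pdivrMr //.
by congr andb; apply/idP/idP => ?; lra.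
Qed.

Lemma wdist_ge y (s : R) :
  (s%:E <= wdist y) = (y <= (p - s * a)%:E) || ((p + s * b)%:E <= y).
Proof.
case: y => [r||] /=; rewrite ?leey ?leNye ?orbT //.
rewrite !lee_fin le_max !ler_pdivlMr //.
by congr orb; apply/idP/idP => ?; lra.
Qed.

Lemma wdist_pref_continuous : continuous_pref wdist_pref.
Proof.
move=> x _; rewrite /wdist_pref; have := wdist_ge0 x.
case: (wdist x) => [s||] // _; split.
- have -> : [set y | dom y /\ wdist y <= s%:E] = [set y | (p - s * a)%:E <= y]
      `&` [set y | y <= (p + s * b)%:E] `&` [set y | 0 <= y].
    apply/seteqP; split => y /=; rewrite wdist_le.
      by case=> y0 /andP[].
    by case=> -[-> ->].
  apply: closedI; last exact: closed_ereal_le_ereal.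
  by apply: closedI; [exact: closed_ereal_le_ereal|exact: closed_ereal_ge_ereal].
- have -> : [set y | dom y /\ s%:E <= wdist y] = ([set y | y <= (p - s * a)%:E]
      `|` [set y | (p + s * b)%:E <= y]) `&` [set y | 0 <= y].
    apply/seteqP; split => y /=; rewrite wdist_ge.
      by case=> y0 /orP.
    by case=> /orP ->.
  apply: closedI; last exact: closed_ereal_le_ereal.
  by apply: closedU; [exact: closed_ereal_ge_ereal|exact: closed_ereal_le_ereal].
- have -> : [set y | dom y /\ wdist y <= +oo] = [set y | 0 <= y].
    by apply/seteqP; split => y /=; [case|rewrite leey].
  exact: closed_ereal_le_ereal.
- have -> : [set y | dom y /\ +oo <= wdist y] = [set y | +oo <= y].
    apply/seteqP; split => -[r||] //=; rewrite /dom ?leey //.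
    - by case=> _; rewrite leye_eq.
    - by case; rewrite leeNy_eq.
  exact: closed_ereal_le_ereal.
Qed.

Lemma wdist_pref_peak_set : (0 <= p)%R -> peak_set wdist_pref = [set p%:E].
Proof.
move=> p0; have wp : wdist p%:E = 0 by rewrite wdist_left // subrr mul0r.
apply/seteqP; split => [q [_ /(_ p%:E)]|_ ->] /=.
  rewrite /wdist_pref wp /dom lee_fin => /(_ p0).
  rewrite wdist_le !mul0r subr0 addr0 => /andP[pq qp].
  by apply: le_anti; rewrite pq qp.
by split => [|y _]; rewrite /dom ?lee_fin // /wdist_pref wp wdist_ge0.
Qed.

Lemma wdist_pref_peak : (0 <= p)%R -> peak wdist_pref = p%:E.
Proof. by move=> p0; apply: peak_set1; exact: wdist_pref_peak_set. Qed.

Lemma wdist_pref_strict x y : wdist x < wdist y -> strict wdist_pref x y.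
Proof.
by move=> xy; split; [exact: ltW | apply/negP; rewrite /wdist_pref -ltNge].
Qed.

Lemma wdist_pref_single_peaked : (0 <= p)%R -> single_peaked wdist_pref.
Proof.
move=> p0; split; last split; last split.
- split; rewrite /wdist_pref; first by move=> x y _ _; apply/orP; exact: le_total.
  by move=> x y z _ _ _; exact: le_trans.
- exact: wdist_pref_continuous.
- by exists p%:E; exact: wdist_pref_peak_set.
move=> x x' _ _; rewrite wdist_pref_peak // !lee_fin !lte_fin.
move=> [[x'x xp]|[px xx']]; apply: wdist_pref_strict.
  rewrite (wdist_left xp) (wdist_left (ltW (lt_le_trans x'x xp))) lte_fin.
  by rewrite ltr_pM2r ?invr_gt0 //; lra.
rewrite (wdist_right px) (wdist_right (le_trans px (ltW xx'))) lte_fin.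
by rewrite ltr_pM2r ?invr_gt0 //; lra.
Qed.

End WeightedDistance.

Lemma steep_slope_gt0 (x d : R) : (0 < d)%R -> (0 < (`|x| + 1) / d)%R.
Proof. by move=> d0; rewrite divr_gt0 // ltr_wpDl. Qed.

Lemma steep_slope_lt (x d : R) : (0 < d)%R -> (x / ((`|x| + 1) / d) < d)%R.
Proof.
move=> d0; rewrite ltr_pdivrMr ?steep_slope_gt0 // mulrC divfK ?gt_eqF //.
by have := ler_norm x; lra.
Qed.

Lemma same_peak_prefers (Ri : pref R) (f w : R) : single_peaked Ri ->
  (0 <= f)%R -> (0 <= w)%R ->
  f%:E < Order.min w%:E (peak Ri) \/ Order.max w%:E (peak Ri) < f%:E ->
  exists2 Ri' : pref R, single_peaked Ri' /\ peak Ri' = peak Ri &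
    strict Ri' w%:E f%:E.
Proof.
(* Flatten the preference on the side of the peak away from [f]; for an
   infinite peak, [Ri] itself will do. *)
move=> spRi f0 w0; have := sp_dom_peak spRi.
case E: (peak Ri) => [q||] // q0; rewrite ?lt_min ?gt_max !lte_fin; last first.
  case=> [/andP[fw _]|/andP[_]]; last by rewrite ltNge leey.
  by exists Ri => //; apply: (sp_strict_left spRi f0 fw); rewrite E leey.
rewrite /dom lee_fin in q0; case=> [/andP[fw fq]|/andP[wf qf]].
- have qf0 : (0 < q - f)%R by rewrite subr_gt0.
  have b0 := steep_slope_gt0 (w - q) qf0.
  exists (wdist_pref q 1 ((`|w - q| + 1) / (q - f))%R).
    by split; [exact: wdist_pref_single_peaked | exact: wdist_pref_peak].
  apply: wdist_pref_strict.
  rewrite (wdist_left ltr01 b0 (ltW fq)) lte_fin gt_max.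
  by rewrite !divr1 steep_slope_lt // andbT; lra.
- have fq0 : (0 < f - q)%R by rewrite subr_gt0.
  have a0 := steep_slope_gt0 (q - w) fq0.
  exists (wdist_pref q ((`|q - w| + 1) / (f - q))%R 1).
    by split; [exact: wdist_pref_single_peaked | exact: wdist_pref_peak].
  apply: wdist_pref_strict.
  rewrite (wdist_right a0 ltr01 (ltW qf)) lte_fin gt_max.
  by rewrite !divr1 steep_slope_lt //=; lra.
Qed.

End Preferences.

Section Profiles.
Variables (R : realType) (n : nat).
Implicit Types (P Q : profile R n) (w f g : 'I_n -> R).

Lemma upd_id P i : upd P i (P i) = P.
Proof. by apply: funext => j; rewrite /upd; case: eqP => // ->. Qed.

Lemma upd_eq P i Ri : upd P i Ri i = Ri.
Proof. by rewrite /upd eqxx. Qed.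

Lemma upd_neq P i Ri j : j != i -> upd P i Ri j = P j.
Proof. by rewrite /upd => /negbTE ->. Qed.

Lemma economy_upd Q i Ri w : (forall j, j != i -> single_peaked (Q j)) ->
  single_peaked Ri -> endowment w -> economy (upd Q i Ri) w.
Proof.
by move=> spQ spRi ew; split => // j; rewrite /upd; case: eqP => // /eqP /spQ.
Qed.

Lemma total_eq_at f g i : Defs.total f = Defs.total g ->
  (forall j, j != i -> f j = g j) -> f i = g i.
Proof.
rewrite /Defs.total (bigD1 i) //= [in RHS](bigD1 i) //= => + fg.
by rewrite (eq_bigr g fg) => /addIr.
Qed.

Lemma total_le_eq f g : (forall j, (f j <= g j)%R) ->
  (Defs.total g <= Defs.total f)%R -> forall j, f j = g j.
Proof.
move=> fg gf j.
have [_ sumE] := leif_sum (P := xpredT) (fun i _ => leif_eq (fg i)).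
have : [forall i, f i == g i] by rewrite -sumE eq_le gf ler_sum.
by move/forallP/(_ j)/eqP.
Qed.

Lemma excess_fin P w : (forall j, peak (P j) \is a fin_num) ->
  excess P w = (\sum_(j < n) fine (peak (P j)) - Defs.total w)%:E.
Proof.
move=> fin; rewrite /excess -(eq_bigr _ (fun j _ => fineK (fin j))).
by rewrite sumEFin EFinB.
Qed.

Lemma excess_le0_fin_num P w : SP_profile P -> excess P w <= 0 ->
  forall j, peak (P j) \is a fin_num.
Proof.
move=> spP; rewrite /excess sube_le0 => z0 j.
have : \sum_(j < n) peak (P j) \is a fin_num.
  rewrite ge0_fin_numE ?(le_lt_trans z0) ?ltry //.
  by apply: sume_ge0 => k _; exact: sp_dom_peak.
by move/sum_fin_numP/(_ j (mem_index_enum j) isT).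
Qed.

End Profiles.

Section Rules.
Variables (R : realType) (n : nat) (phi : rule_fun R n).
Hypothesis rule : is_rule phi.

Lemma rule_ge0 P w : economy P w -> forall j, (0 <= phi P w j)%R.
Proof. by move=> ec; case: (rule ec). Qed.

Lemma rule_total P w : economy P w -> Defs.total (phi P w) = Defs.total w.
Proof. by move=> ec; case: (rule ec). Qed.

Section Sufficiency.
Hypothesis srr : simple_reallocation_rule phi.

Lemma srr_between P w : economy P w -> forall j,
  Order.min (w j)%:E (peak (P j)) <= (phi P w j)%:E /\
  (phi P w j)%:E <= Order.max (w j)%:E (peak (P j)).
Proof.
move=> ec j; have [simple_peak nonsimple_between] := srr.2 P w ec j.
have [/simple_peak ->|/nonsimple_between //] := pselect (simple_agent P w j).
by rewrite ge_min le_max lexx !orbT.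
Qed.

Lemma srr_endowment_peak P w j : economy P w -> peak (P j) = (w j)%:E ->
  phi P w j = w j.
Proof.
move=> ec pw; have [lo hi] := srr_between ec j.
by rewrite pw minxx maxxx !lee_fin in lo hi; apply: le_anti; rewrite lo hi.
Qed.

Lemma srr_endowments_guarantee : endowments_guarantee phi.
Proof.
move=> P w i ec pw; rewrite (srr_endowment_peak ec pw).
by split; apply: (sp_refl (ec.1 i)); exact/dom_EFin/(ec.2.1 i).
Qed.

Lemma srr_below_peaks P w : economy P w -> 0 <= excess P w ->
  forall j, (phi P w j)%:E <= peak (P j).
Proof.
move=> ec z0 j; have [pw|wp] := ltP (peak (P j)) (w j)%:E.
  by rewrite ((srr.2 P w ec j).1 _) //; left.
have [_] := srr_between ec j; rewrite le_max => /orP[fw|//].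
exact: le_trans fw wp.
Qed.

Lemma srr_above_peaks P w : economy P w -> excess P w <= 0 ->
  forall j, peak (P j) <= (phi P w j)%:E.
Proof.
move=> ec z0 j; have [wp|pw] := ltP (w j)%:E (peak (P j)).
  by rewrite ((srr.2 P w ec j).1 _) //; right.
have [+ _] := srr_between ec j; rewrite ge_min => /orP[wf|//].
exact: le_trans pw wf.
Qed.

Lemma srr_efficient : efficient phi.
Proof.
move=> P w ec [x [x0 [tx [xR [k xk]]]]].
suff xf : x k = phi P w k by move: xk; rewrite xf => -[].
have tf := rule_total ec; have [z0|z0] := leP 0 (excess P w).
  apply/esym; apply: (total_le_eq _ _ k) => [j|]; last by rewrite tx tf.
  exact: (sp_pref_below_peak (ec.1 j) (x0 j) (srr_below_peaks ec z0 j)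
                               (xR j)).
apply: (total_le_eq _ _ k) => [j|]; last by rewrite tx tf.
exact: (sp_pref_above_peak (ec.1 j) (rule_ge0 ec j)
                            (srr_above_peaks ec (ltW z0) j) (xR j)).
Qed.

Lemma srr_option_set_endowment i Ri w : endowment w -> single_peaked Ri ->
  option_set phi i Ri w (w i).
Proof.
move=> ew spRi; pose Q : profile R n := fun j => wdist_pref (w j) 1 1.
have spQ j : single_peaked (Q j) := wdist_pref_single_peaked ltr01 ltr01 (ew.1 j).
exists Q; split => [j _|]; first exact: spQ.
have ec : economy (upd Q i Ri) w := economy_upd (fun j _ => spQ j) spRi ew.
apply: (total_eq_at (rule_total ec)) => j ji.
apply: srr_endowment_peak ec _.
by rewrite upd_neq // (wdist_pref_peak ltr01 ltr01 (ew.1 j)).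
Qed.

Lemma srr_option_set_pref i Ri w x : endowment w -> single_peaked Ri ->
  option_set phi i Ri w x -> Ri x%:E (w i)%:E.
Proof.
move=> ew spRi [Q [spQ <-]]; have ec := economy_upd spQ spRi ew.
have [lo hi] := srr_between ec i; rewrite upd_eq in lo hi.
exact: (sp_pref_between spRi (ew.1 i) lo hi).
Qed.

Lemma srr_NOM : NOM phi.
Proof.
move=> i Ri Ri' w ew spRi spRi' [_ obvious].
have [x Ox] := obvious (w i) (srr_option_set_endowment i ew spRi').
by case=> _; apply; exact: srr_option_set_pref Ox.
Qed.

End Sufficiency.

Section Necessity.
Hypotheses (opo : own_peak_only phi) (eff : efficient phi).
Hypotheses (eg : endowments_guarantee phi) (nom : NOM phi).

Lemma nom_individually_rational P w : economy P w ->
  forall i, P i (phi P w i)%:E (w i)%:E.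
Proof.
move=> ec i; have [spP [w0 _]] := ec.
have spP_others j : j != i -> single_peaked (P j) by move=> _; exact: spP.
apply: contrapT => worse.
have better_w : strict (P i) (w i)%:E (phi P w i)%:E.
  exact: (sp_strict_of_not_pref (spP i) (dom_EFin (rule_ge0 ec i))
                                (dom_EFin (w0 i)) worse).
pose Rw := wdist_pref (w i) 1 1.
have spRw : single_peaked Rw := wdist_pref_single_peaked ltr01 ltr01 (w0 i).
have pRw : peak Rw = (w i)%:E := wdist_pref_peak ltr01 ltr01 (w0 i).
have Rw_gets_w Q : (forall j, j != i -> single_peaked (Q j)) ->
    phi (upd Q i Rw) w i = w i.
  move=> spQ; have ec' : economy (upd Q i Rw) w := economy_upd spQ spRw ec.2.
  have := eg (i := i) ec'; rewrite upd_eq pRw => /(_ erefl) [Rww _].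
  have := sp_peak_uniq spRw (dom_EFin (rule_ge0 ec' i)).
  by rewrite pRw => /(_ Rww) [].
apply: (nom (i := i) ec.2 (spP i) spRw); split.
  by exists P; split => //; rewrite Rw_gets_w // upd_id.
move=> _ [Q [spQ <-]]; rewrite Rw_gets_w //.
by exists (phi P w i) => //; exists P; split => //; rewrite upd_id.
Qed.

Lemma necessary_between P w : economy P w -> forall i,
  Order.min (w i)%:E (peak (P i)) <= (phi P w i)%:E /\
  (phi P w i)%:E <= Order.max (w i)%:E (peak (P i)).
Proof.
move=> ec i; have [spP [w0 _]] := ec.
have pref_phi_w Ri : single_peaked Ri -> peak Ri = peak (P i) ->
    Ri (phi P w i)%:E (w i)%:E.
  move=> spRi pRi; rewrite (opo ec spRi pRi).
  have ec' : economy (upd P i Ri) w := economy_upd (fun j _ => spP j) spRi ec.2.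
  by have := nom_individually_rational ec' i; rewrite upd_eq.
have inside : ~ ((phi P w i)%:E < Order.min (w i)%:E (peak (P i)) \/
                 Order.max (w i)%:E (peak (P i)) < (phi P w i)%:E).
  case/(same_peak_prefers (spP i) (rule_ge0 ec i) (w0 i)) => Ri [spRi pRi] [_].
  by apply; exact: pref_phi_w.
by split; rewrite leNgt; apply/negP => out; apply: inside; [left|right].
Qed.

Lemma efficient_no_over_under P w g t : economy P w ->
  peak (P g) < (phi P w g)%:E -> (phi P w t)%:E < peak (P t) -> False.
Proof.
move=> ec; set f := phi P w => over under.
have f0 j : (0 <= f j)%R := rule_ge0 ec j.
have gt : g != t.
  by apply/eqP => gt; move: under; rewrite -gt => /(lt_trans over); rewrite ltxx.
have := sp_dom_peak (ec.1 g); move: over.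
case E: (peak (P g)) => [r||] //; rewrite lte_fin /dom lee_fin => over r0.
have rg : (0 < f g - r)%R by rewrite subr_gt0.
have [e /andP[e0 e_le] shift] := lt_exists_shift rg under.
(* Moving [e] from [g] down towards his peak to [t] up towards his helps both. *)
pose x j := (f j + (if j == t then e else 0) - (if j == g then e else 0))%R.
have xg : x g = (f g - e)%R by rewrite /x eqxx (negbTE gt) addr0.
have xt : x t = (f t + e)%R by rewrite /x eqxx eq_sym (negbTE gt) subr0.
have xj j : j != g -> j != t -> x j = f j.
  by move=> /negbTE jg /negbTE jt; rewrite /x jg jt addr0 subr0.
have better_g : strict (P g) (x g)%:E (f g)%:E.
  by rewrite xg; apply: (sp_strict_right (ec.1 g)); rewrite ?E ?lee_fin; lra.
have better_t : strict (P t) (x t)%:E (f t)%:E.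
  by rewrite xt; apply: (sp_strict_left (ec.1 t) (f0 t)) shift; lra.
apply: (eff ec); exists x; split; [|split; [|split]].
- move=> j; have [->|jg] := eqVneq j g; first by rewrite xg; lra.
  have [->|jt] := eqVneq j t; first by rewrite xt; have := f0 t; lra.
  by rewrite xj.
- rewrite -(rule_total ec) /Defs.total /x sumrB big_split /=.
  by rewrite -!big_mkcond !big_pred1_eq addrK.
- move=> j; have [->|jg] := eqVneq j g; first exact: better_g.1.
  have [->|jt] := eqVneq j t; first exact: better_t.1.
  by rewrite xj //; apply: (sp_refl (ec.1 j)); exact: dom_EFin.
- by exists g.
Qed.

Lemma efficient_below_peaks P w : economy P w -> 0 <= excess P w ->
  forall k, (phi P w k)%:E <= peak (P k).
Proof.
move=> ec z0 k; rewrite leNgt; apply/negP => over.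
have le_phi l : peak (P l) <= (phi P w l)%:E.
  by rewrite leNgt; apply/negP; exact: efficient_no_over_under ec over.
have fin l : peak (P l) \is a fin_num.
  rewrite ge0_fin_numE ?(sp_dom_peak (ec.1 l)) //.
  by rewrite (le_lt_trans (le_phi l)) ?ltry.
suff pk : peak (P k) = (phi P w k)%:E by move: over; rewrite pk ltxx.
rewrite -(fineK (fin k)); congr EFin.
apply: (total_le_eq (f := fun l => fine (peak (P l)))) => [l|].
  by rewrite -lee_fin fineK.
by move: z0; rewrite (excess_fin _ fin) lee_fin subr_ge0 (rule_total ec).
Qed.

Lemma efficient_above_peaks P w : economy P w -> excess P w <= 0 ->
  forall k, peak (P k) <= (phi P w k)%:E.
Proof.
move=> ec z0 k; rewrite leNgt; apply/negP => under.
have le_phi l : (phi P w l)%:E <= peak (P l).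
  rewrite leNgt; apply/negP => over.
  exact: efficient_no_over_under ec over under.
have fin := excess_le0_fin_num ec.1 z0.
suff pk : (phi P w k)%:E = peak (P k) by move: under; rewrite pk ltxx.
rewrite -(fineK (fin k)); congr EFin.
apply: (total_le_eq (g := fun l => fine (peak (P l)))) => [l|].
  by rewrite -lee_fin fineK.
by move: z0; rewrite (excess_fin _ fin) lee_fin subr_le0 (rule_total ec).
Qed.

Lemma necessary_simple_reallocation : simple_reallocation_rule phi.
Proof.
split => // P w ec i; have [lo hi] := necessary_between ec i.
split => // -[[z0 pw]|[z0 wp]]; apply: le_anti.
  by rewrite (min_r (ltW pw)) in lo; rewrite lo efficient_below_peaks.
by rewrite (max_r (ltW wp)) in hi; rewrite hi efficient_above_peaks.
Qed.

End Necessity.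

End Rules.

Theorem proposition3 (R : realType) (n : nat) (phi : rule_fun R n) :
  is_rule phi ->
  ((own_peak_only phi /\ efficient phi /\ endowments_guarantee phi /\ NOM phi)
   <-> simple_reallocation_rule phi).
Proof.
move=> rule; split => [[opo [eff [eg nom]]]|srr].
  exact: necessary_simple_reallocation.
split; first exact: srr.1.
split; first exact: srr_efficient.
split; first exact: srr_endowments_guarantee.
exact: srr_NOM.
Qed.
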